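(* If a non-linear regularizing filter $(\varphi_\alpha)_{\alpha>0}$ satisfies Assumption A with constants $b,c>0$ (as in (A2)), then it satisfies Assumption B with $d=bc$ and $e=1/(2\sqrt b)$.
   Context: A non-linear regularizing filter is a family $(\varphi_\alpha)_{\alpha>0}$ of functions $\varphi_\alpha\colon(0,\infty)\times\mathbb{R}\to\mathbb{R}$ such that for all $\alpha,\kappa>0$: (F1) $\varphi_\alpha(\kappa,\cdot)$ is non-decreasing; (F2) $\varphi_\alpha(\kappa,\cdot)$ is 1-Lipschitz; (F3) $\varphi_\alpha(\kappa,0)=0$; (F4) $\lim_{\alpha\to0}\varphi_\alpha(\kappa,c)=c$ for all $c\in\mathbb{R}$. Assumption A: (A1) for all $\kappa>0$ and $y\in\mathbb{R}$, the set $\{(w-y)/\alpha:\varphi_\alpha(\kappa,w)=y\}$ does not depend on $\alpha>0$; (A2) for some $\tilde\alpha>0$ there exist $b,c>0$ such that for all $\kappa>0$ and $x\in\mathbb{R}$: $|x|\le\min\big(\varphi_{\tilde\alpha}(\kappa,\cdot)^{-1}(c\kappa)\big)\Rightarrow|\varphi_{\tilde\alpha}(\kappa,x)|\le\frac{\kappa^2}{\kappa^2+\tilde\alpha b}|x|$ (min denotes the smallest element of the preimage interval). Assumption B: (B1) for all $\kappa>0$ and $x\in\mathbb{R}$, the family $(|\varphi_\alpha(\kappa,x)|)_{\alpha>0}$ is monotonically increasing as $\alpha\downarrow0$ (i.e. $\alpha<\alpha'$ implies $|\varphi_\alpha(\kappa,x)|\ge|\varphi_{\alpha'}(\kappa,x)|$);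 (B2) there exist $d,e>0$ such that for all $\kappa>0$, $\alpha>0$, $x\in\mathbb{R}$: $|x|\le d\alpha/\kappa\Rightarrow|\varphi_\alpha(\kappa,x)|\le\frac{e\kappa}{\sqrt\alpha}|x|$. *)

From Stdlib Require Import Reals Lra.
Open Scope R_scope.

(* A family of filters: phi alpha kappa x  stands for  varphi_alpha(kappa, x).
   Only values with alpha > 0 and kappa > 0 are ever used. *)
Definition filter_family := R -> R -> R -> R.

Definition is_regularizing_filter (phi : filter_family) : Prop :=
  (forall alpha kappa, 0 < alpha -> 0 < kappa ->
     (forall x y, x <= y -> phi alpha kappa x <= phi alpha kappa y) /\
     (forall x y, Rabs (phi alpha kappa x - phi alpha kappa y) <= Rabs (x - y)) /\
     phi alpha kappa 0 = 0) /\
  (forall kappa c, 0 < kappa ->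
     forall eps, 0 < eps -> exists delta, 0 < delta /\
       forall alpha, 0 < alpha < delta -> Rabs (phi alpha kappa c - c) < eps).

(* (A1): the set {(w - y)/alpha | phi alpha kappa w = y} does not depend on alpha > 0. *)
Definition assumption_A1 (phi : filter_family) : Prop :=
  forall kappa y, 0 < kappa ->
  forall alpha alpha', 0 < alpha -> 0 < alpha' ->
  forall z,
    (exists w, phi alpha kappa w = y /\ z = (w - y) / alpha) <->
    (exists w, phi alpha' kappa w = y /\ z = (w - y) / alpha').

Definition is_min_preimage (phi : filter_family) (alpha kappa v m : R) : Prop :=
  phi alpha kappa m = v /\ (forall w, phi alpha kappa w = v -> m <= w).

Definition assumption_A2 (phi : filter_family) (atilde b c : R) : Prop :=
  forall kappa x, 0 < kappa ->
  forall m, is_min_preimage phi atilde kappa (c * kappa) m ->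
  Rabs x <= m ->
  Rabs (phi atilde kappa x) <= kappa ^ 2 / (kappa ^ 2 + atilde * b) * Rabs x.

Definition assumption_B1 (phi : filter_family) : Prop :=
  forall kappa x, 0 < kappa ->
  forall alpha alpha', 0 < alpha -> alpha < alpha' ->
  Rabs (phi alpha' kappa x) <= Rabs (phi alpha kappa x).

Definition assumption_B2 (phi : filter_family) (d e : R) : Prop :=
  forall kappa alpha x, 0 < kappa -> 0 < alpha ->
  Rabs x <= d * alpha / kappa ->
  Rabs (phi alpha kappa x) <= e * kappa / sqrt alpha * Rabs x.

(* Write f = phi_alpha(kappa, .) and define the rescaling
     stretch f lam x = f x + lam (x - f x).
   For a monotone 1-Lipschitz f with f 0 = 0, the values f x and x - f x both
   have the sign of x, so |stretch f lam x| = |f x| + lam |x - f x|, and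
   stretch f lam is nondecreasing for lam > 0.  Assumption (A1) says exactly
   that phi_alpha' (stretch phi_alpha (alpha'/alpha) x) = phi_alpha x, and the
   two opposite rescalings are mutually inverse.
   (B1): rescaling x from alpha' down to alpha < alpha' gives a point between 0
   and x with the same filtered value phi_alpha'(x), so monotonicity of
   phi_alpha compares the two values.
   (B2): let m be the smallest preimage of c kappa under g = phi_atilde.  (A2)
   yields |g w| b <= kappa^2 |w - g w| / atilde for |w| <= m; at w = +-m this
   shows that the rescalings of +-m to alpha lie outside [-b c alpha/kappa,
   b c alpha/kappa].  By monotonicity, every x in that interval is rescaled to
   a point of [-m, m], where (A2) gives |y| b alpha <= kappa^2 (|x| - |y|) for
   y = phi_alpha x; the AM-GM inequality turns this into (B2). *)
From Stdlib Require Import Reals Lra Psatz.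
Open Scope R_scope.

Definition stretch (f : R -> R) (lam x : R) : R := f x + lam * (x - f x).

Section FilterFunction.

Variable f : R -> R.
Hypothesis f_mono : forall x y, x <= y -> f x <= f y.
Hypothesis f_lip : forall x y, Rabs (f x - f y) <= Rabs (x - y).
Hypothesis f_0 : f 0 = 0.

Lemma filter_nonneg x : 0 <= x -> 0 <= f x <= x.
Proof.
  intros Hx. pose proof (f_mono 0 x Hx) as Hmono. pose proof (f_lip x 0) as Hlip.
  rewrite f_0, !Rminus_0_r in *.
  rewrite (Rabs_right x), Rabs_right in Hlip by lra. lra.
Qed.

Lemma filter_nonpos x : x <= 0 -> x <= f x <= 0.
Proof.
  intros Hx. pose proof (f_mono x 0 Hx) as Hmono. pose proof (f_lip x 0) as Hlip.
  rewrite f_0, !Rminus_0_r in *.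
  rewrite (Rabs_left1 x), Rabs_left1 in Hlip by lra. lra.
Qed.

Lemma stretch_0 lam : stretch f lam 0 = 0.
Proof. unfold stretch. rewrite f_0. ring. Qed.

(* Since f x and x - f x have the sign of x, |x| splits as |f x| + |x - f x|. *)
Lemma filter_abs_split x : Rabs x = Rabs (f x) + Rabs (x - f x).
Proof.
  destruct (Rle_dec 0 x) as [Hx | Hx].
  - pose proof (filter_nonneg x Hx). rewrite !Rabs_right by lra. ring.
  - pose proof (filter_nonpos x ltac:(lra)). rewrite !Rabs_left1 by lra. ring.
Qed.

(* Likewise every rescaling of x has the sign of x, so its absolute value splits. *)
Lemma stretch_abs lam x :
  0 <= lam -> Rabs (stretch f lam x) = Rabs (f x) + lam * Rabs (x - f x).
Proof.
  intros Hlam. unfold stretch. destruct (Rle_dec 0 x) as [Hx | Hx].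
  - pose proof (filter_nonneg x Hx).
    rewrite !Rabs_right by nra. ring.
  - pose proof (filter_nonpos x ltac:(lra)).
    rewrite !Rabs_left1 by nra. ring.
Qed.

(* The rescaling is nondecreasing: its increment is d + lam (D - d) where
   0 <= d = f y - f x <= D = y - x. *)
Lemma stretch_mono lam x y : 0 < lam -> x <= y -> stretch f lam x <= stretch f lam y.
Proof.
  intros Hlam Hxy. unfold stretch.
  pose proof (f_mono x y Hxy) as Hmono. pose proof (f_lip y x) as Hlip.
  rewrite !Rabs_right in Hlip by lra. nra.
Qed.

Lemma min_preimage_exists v :
  0 < v -> (exists w, f w = v) -> exists m, f m = v /\ forall w, f w = v -> m <= w.
Proof.
  intros Hv [w0 Hw0].
  destruct (completeness (fun t => f (- t) = v)) as [l [Hub Hlub]].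
  - exists 0. intros t Ht. destruct (Rle_dec t 0) as [|Hpos]; [assumption|].
    pose proof (f_mono (- t) 0 ltac:(lra)). lra.
  - exists (- w0). rewrite Ropp_involutive. exact Hw0.
  - assert (Hlow : forall w, f w = v -> - l <= w).
    { intros w Hw. assert (- w <= l) by (apply Hub; rewrite Ropp_involutive; exact Hw). lra. }
    exists (- l). split; [|exact Hlow].
    assert (Hle : f (- l) <= v) by (rewrite <- Hw0; apply f_mono, Hlow, Hw0).
    destruct (Rle_lt_or_eq_dec _ _ Hle) as [Hlt|]; [exfalso|assumption].
    (* every preimage point lies at distance >= v - f(-l) from -l *)
    assert (Hgap : l <= l - (v - f (- l))); [|lra].
    apply Hlub. intros t Ht.
    pose proof (Hub t Ht). pose proof (f_lip (- t) (- l)) as Hlip.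
    rewrite Ht, Rabs_right, Rabs_right in Hlip by lra. lra.
Qed.

End FilterFunction.

Lemma intermediate_value (f : R -> R) u v :
  continuity f -> 0 < u -> f 0 < v < f u -> exists w, f w = v.
Proof.
  intros Hcont Hu Hv.
  destruct (IVT (fun w => f w - v) 0 u) as [w [_ Hw]].
  - apply continuity_minus; [exact Hcont | apply continuity_const; intros ? ?; reflexivity].
  - exact Hu.
  - lra.
  - lra.
  - exists w. lra.
Qed.

Section Family.

Variable phi : filter_family.
Hypothesis Hphi : is_regularizing_filter phi.
Hypothesis HA1 : assumption_A1 phi.

Lemma phi_filter a k : 0 < a -> 0 < k ->
  (forall x y, x <= y -> phi a k x <= phi a k y) /\
  (forall x y, Rabs (phi a k x - phi a k y) <= Rabs (x - y)) /\
  phi a k 0 = 0.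
Proof. intros Ha Hk. exact (proj1 Hphi a k Ha Hk). Qed.

Lemma phi_stretch a a' k x : 0 < a -> 0 < a' -> 0 < k ->
  phi a' k (stretch (phi a k) (a' / a) x) = phi a k x.
Proof.
  intros Ha Ha' Hk.
  destruct (HA1 k (phi a k x) Hk a a' Ha Ha' ((x - phi a k x) / a)) as [Hto _].
  destruct (Hto (ex_intro _ x (conj eq_refl eq_refl))) as [w [Hw Hz]].
  unfold stretch. replace (phi a k x + a' / a * (x - phi a k x)) with w; [exact Hw|].
  replace (a' / a * (x - phi a k x)) with (a' * ((x - phi a k x) / a)) by (field; lra).
  rewrite Hz. field. lra.
Qed.

Lemma stretch_inverse a a' k x : 0 < a -> 0 < a' -> 0 < k ->
  stretch (phi a' k) (a / a') (stretch (phi a k) (a' / a) x) = x.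
Proof.
  intros Ha Ha' Hk. unfold stretch at 1. rewrite phi_stretch by assumption.
  unfold stretch. field. lra.
Qed.

(* Every positive value is attained by each filter: it is attained for small
   alpha by (F4) and the intermediate value theorem, then transported by (A1). *)
Lemma phi_attains a k v : 0 < a -> 0 < k -> 0 < v -> exists w, phi a k w = v.
Proof.
  intros Ha Hk Hv.
  destruct (proj2 Hphi k (2 * v) Hk v Hv) as [delta [Hdelta Hclose]].
  set (a0 := delta / 2).
  assert (Ha0 : 0 < a0) by (unfold a0; lra).
  destruct (phi_filter a0 k Ha0 Hk) as [_ [Hlip H0]].
  assert (Hnear : Rabs (phi a0 k (2 * v) - 2 * v) < v) by (apply Hclose; unfold a0; lra).
  apply Rabs_def2 in Hnear.
  destruct (intermediate_value (phi a0 k) (2 * v) v) as [w0 Hw0].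
  - intros x eps Heps. exists eps. split; [exact Heps|].
    intros y [_ Hy]. eapply Rle_lt_trans; [apply Hlip|exact Hy].
  - lra.
  - rewrite H0. lra.
  - exists (stretch (phi a0 k) (a / a0) w0). rewrite phi_stretch; assumption.
Qed.

Lemma phi_B1 : assumption_B1 phi.
Proof.
  intros k x Hk a a' Ha Haa'.
  assert (Ha' : 0 < a') by lra.
  destruct (phi_filter a k Ha Hk) as [Hmono [_ H0]].
  destruct (phi_filter a' k Ha' Hk) as [Hmono' [Hlip' H0']].
  (* u lies between 0 and x and has the filtered value phi_a'(x) at level a *)
  set (u := stretch (phi a' k) (a / a') x).
  assert (Hu : phi a k u = phi a' k x) by (apply phi_stretch; assumption).
  assert (Hlam : 0 < a / a' <= 1).
  { split; [apply Rdiv_lt_0_compat; lra|].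
    assert (a / a' * a' = a) by (field; lra). nra. }
  assert (Habs : Rabs u <= Rabs x).
  { unfold u. rewrite (stretch_abs _ Hmono' Hlip' H0') by lra.
    rewrite (filter_abs_split _ Hmono' Hlip' H0' x).
    pose proof (Rabs_pos (x - phi a' k x)). nra. }
  assert (Hu_sign : (0 <= x -> 0 <= u) /\ (x <= 0 -> u <= 0)).
  { assert (Hmono_u : forall v w, v <= w ->
      stretch (phi a' k) (a / a') v <= stretch (phi a' k) (a / a') w)
      by (intros v w; apply (stretch_mono _ Hmono' Hlip'); lra).
    split; intros Hx;
      [pose proof (Hmono_u 0 x Hx) as Hcmp | pose proof (Hmono_u x 0 Hx) as Hcmp];
      rewrite (stretch_0 _ H0') in Hcmp; exact Hcmp. }
  rewrite <- Hu. destruct Hu_sign as [Hpos Hneg]. destruct (Rle_dec 0 x) as [Hx | Hx].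
  - specialize (Hpos Hx). rewrite !Rabs_right in Habs by lra.
    pose proof (Hmono 0 u Hpos). pose proof (Hmono u x Habs).
    rewrite H0 in *. rewrite !Rabs_right by lra. lra.
  - specialize (Hneg ltac:(lra)). rewrite !Rabs_left1 in Habs by lra.
    pose proof (Hmono u 0 Hneg). pose proof (Hmono x u ltac:(lra)).
    rewrite H0 in *. rewrite !Rabs_left1 by lra. lra.
Qed.

Section Threshold.

Variables atilde b c k m : R.
Hypothesis Hatilde : 0 < atilde.
Hypothesis Hb : 0 < b.
Hypothesis Hc : 0 < c.
Hypothesis Hk : 0 < k.
Hypothesis HA2 : assumption_A2 phi atilde b c.
Hypothesis Hm : is_min_preimage phi atilde k (c * k) m.

Lemma A2_slope w :
  Rabs w <= m ->
  Rabs (phi atilde k w) * b <= k ^ 2 * (Rabs (w - phi atilde k w) / atilde).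
Proof.
  intros Hw. pose proof (HA2 k w Hk m Hm Hw) as Hbound.
  destruct (phi_filter atilde k Hatilde Hk) as [Hmono [Hlip H0]].
  rewrite (filter_abs_split _ Hmono Hlip H0 w) in Hbound.
  set (Y := Rabs (phi atilde k w)) in *. set (Z := Rabs (w - phi atilde k w)) in *.
  assert (Hden : 0 < k ^ 2 + atilde * b) by nra.
  apply Rmult_le_compat_r with (r := k ^ 2 + atilde * b) in Hbound; [|lra].
  replace (k ^ 2 / (k ^ 2 + atilde * b) * (Y + Z) * (k ^ 2 + atilde * b))
    with (k ^ 2 * (Y + Z)) in Hbound by (field; lra).
  apply Rmult_le_reg_l with atilde; [lra|].
  replace (atilde * (k ^ 2 * (Z / atilde))) with (k ^ 2 * Z) by (field; lra). nra.
Qed.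

Lemma slope_lower_bound w :
  Rabs w <= m -> Rabs w * b / (k ^ 2 + atilde * b) <= Rabs (w - phi atilde k w) / atilde.
Proof.
  intros Hw. pose proof (A2_slope w Hw) as Hslope.
  destruct (phi_filter atilde k Hatilde Hk) as [Hmono [Hlip H0]].
  rewrite (filter_abs_split _ Hmono Hlip H0 w).
  set (Y := Rabs (phi atilde k w)) in *. set (Z := Rabs (w - phi atilde k w)) in *.
  assert (Hden : 0 < k ^ 2 + atilde * b) by nra.
  apply Rmult_le_reg_r with ((k ^ 2 + atilde * b) * atilde); [nra|].
  replace ((Y + Z) * b / (k ^ 2 + atilde * b) * ((k ^ 2 + atilde * b) * atilde))
    with ((Y + Z) * b * atilde) by (field; lra).
  replace (Z / atilde * ((k ^ 2 + atilde * b) * atilde)) with (Z * (k ^ 2 + atilde * b))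
    by (field; lra).
  apply Rmult_le_compat_r with (r := atilde) in Hslope; [|lra].
  replace (k ^ 2 * (Z / atilde) * atilde) with (k ^ 2 * Z) in Hslope by (field; lra).
  nra.
Qed.

Lemma threshold_nonneg : 0 <= m.
Proof.
  destruct (phi_filter atilde k Hatilde Hk) as [Hmono [_ H0]].
  destruct (Rle_dec 0 m) as [|Hneg]; [assumption|].
  pose proof (Hmono m 0 ltac:(lra)). rewrite (proj1 Hm), H0 in *. nra.
Qed.

(* (A2) at m itself, where g m = c k, gives c (k^2 + atilde b) <= m k. *)
Lemma threshold_lower_bound : c * b / k <= m * b / (k ^ 2 + atilde * b).
Proof.
  pose proof threshold_nonneg as Hm0.
  pose proof (A2_slope m ltac:(rewrite Rabs_right; lra)) as Hslope.
  destruct (phi_filter atilde k Hatilde Hk) as [Hmono [Hlip H0]].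
  pose proof (filter_nonneg _ Hmono Hlip H0 m Hm0) as Hmk.
  rewrite (proj1 Hm) in Hslope, Hmk.
  rewrite (Rabs_right (c * k)), (Rabs_right (m - c * k)) in Hslope by nra.
  apply Rmult_le_compat_r with (r := atilde) in Hslope; [|lra].
  replace (k ^ 2 * ((m - c * k) / atilde) * atilde) with (k ^ 2 * (m - c * k))
    in Hslope by (field; lra).
  assert (Hkey : c * (k ^ 2 + atilde * b) <= m * k)
    by (apply Rmult_le_reg_l with k; [exact Hk | nra]).
  assert (Hden : 0 < k ^ 2 + atilde * b) by nra.
  replace (c * b / k) with (c * (k ^ 2 + atilde * b) * (b / (k * (k ^ 2 + atilde * b))))
    by (field; lra).
  replace (m * b / (k ^ 2 + atilde * b)) with (m * k * (b / (k * (k ^ 2 + atilde * b))))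
    by (field; lra).
  apply Rmult_le_compat_r; [|exact Hkey].
  apply Rlt_le, Rdiv_lt_0_compat; [exact Hb | apply Rmult_lt_0_compat; assumption].
Qed.

Lemma stretch_threshold a w :
  0 < a -> Rabs w = m -> b * c * a / k <= Rabs (stretch (phi atilde k) (a / atilde) w).
Proof.
  intros Ha Hw.
  destruct (phi_filter atilde k Hatilde Hk) as [Hmono [Hlip H0]].
  pose proof threshold_lower_bound as Hlow.
  pose proof (slope_lower_bound w ltac:(lra)) as Hslope. rewrite Hw in Hslope.
  rewrite (stretch_abs _ Hmono Hlip H0)
    by (apply Rlt_le, Rdiv_lt_0_compat; assumption).
  pose proof (Rabs_pos (phi atilde k w)).
  replace (a / atilde * Rabs (w - phi atilde k w))
    with (a * (Rabs (w - phi atilde k w) / atilde)) by (field; lra).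
  replace (b * c * a / k) with (a * (c * b / k)) by (field; lra).
  nra.
Qed.

(* Every x with |x| <= b c a / k is rescaled from a to atilde into [-m, m]:
   it lies between the rescalings of -m and m, and rescaling is monotone. *)
Lemma stretch_below_threshold a x :
  0 < a -> Rabs x <= b * c * a / k -> Rabs (stretch (phi a k) (atilde / a) x) <= m.
Proof.
  intros Ha Hx.
  pose proof threshold_nonneg as Hm0.
  destruct (phi_filter atilde k Hatilde Hk) as [Hmono_t [Hlip_t H0_t]].
  destruct (phi_filter a k Ha Hk) as [Hmono [Hlip _]].
  set (S := stretch (phi atilde k) (a / atilde)).
  assert (HS_mono : forall u v, u <= v -> S u <= S v)
    by (intros u v; apply (stretch_mono _ Hmono_t Hlip_t), Rdiv_lt_0_compat; assumption).
  pose proof (stretch_0 _ H0_t (a / atilde)) as HS0. fold S in HS0.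
  pose proof (Rle_abs x). pose proof (Rle_abs (- x)) as Habs_neg.
  rewrite Rabs_Ropp in Habs_neg.
  assert (Hup : x <= S m).
  { pose proof (stretch_threshold a m Ha ltac:(rewrite Rabs_right; lra)) as Hfar.
    pose proof (HS_mono 0 m Hm0) as Hsign. fold S in Hfar.
    rewrite HS0, Rabs_right in * by lra. lra. }
  assert (Hdown : S (- m) <= x).
  { pose proof (stretch_threshold a (- m) Ha ltac:(rewrite Rabs_Ropp, Rabs_right; lra))
      as Hfar.
    pose proof (HS_mono (- m) 0 ltac:(lra)) as Hsign. fold S in Hfar.
    rewrite HS0 in Hsign. rewrite Rabs_left1 in Hfar by lra. lra. }
  assert (HT_mono : forall u v, u <= v ->
    stretch (phi a k) (atilde / a) u <= stretch (phi a k) (atilde / a) v)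
    by (intros u v; apply (stretch_mono _ Hmono Hlip), Rdiv_lt_0_compat; assumption).
  pose proof (HT_mono _ _ Hup). pose proof (HT_mono _ _ Hdown).
  unfold S in *. rewrite !stretch_inverse in * by assumption.
  apply Rabs_le; lra.
Qed.

(* Core estimate behind (B2): (A2) at the rescaled point, whose filtered value
   is y = phi_a x, gives |y| b a <= k^2 (|x| - |y|). *)
Lemma B2_core a x :
  0 < a -> Rabs x <= b * c * a / k ->
  Rabs (phi a k x) * b * a <= k ^ 2 * (Rabs x - Rabs (phi a k x)).
Proof.
  intros Ha Hx.
  destruct (phi_filter a k Ha Hk) as [Hmono [Hlip H0]].
  pose proof (A2_slope _ (stretch_below_threshold a x Ha Hx)) as Hslope.
  rewrite phi_stretch in Hslope by assumption.
  unfold stretch in Hslope.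
  replace (phi a k x + atilde / a * (x - phi a k x) - phi a k x)
    with (atilde / a * (x - phi a k x)) in Hslope by ring.
  rewrite Rabs_mult, (Rabs_right (atilde / a)) in Hslope
    by (apply Rle_ge, Rlt_le, Rdiv_lt_0_compat; assumption).
  replace (atilde / a * Rabs (x - phi a k x) / atilde) with (Rabs (x - phi a k x) / a)
    in Hslope by (field; lra).
  apply Rmult_le_compat_r with (r := a) in Hslope; [|lra].
  replace (k ^ 2 * (Rabs (x - phi a k x) / a) * a) with (k ^ 2 * Rabs (x - phi a k x))
    in Hslope by (field; lra).
  rewrite (filter_abs_split _ Hmono Hlip H0 x).
  replace (Rabs (phi a k x) + Rabs (x - phi a k x) - Rabs (phi a k x))
    with (Rabs (x - phi a k x)) by ring.
  exact Hslope.
Qed.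

End Threshold.

End Family.

(* AM-GM step: from Y b a <= k^2 (X - Y) and 2 k sqrt(a b) <= a b + k^2 we get
   Y <= k X / (2 sqrt b sqrt a). *)
Lemma amgm_bound b k a X Y : 0 < b -> 0 < k -> 0 < a -> 0 <= Y ->
  Y * b * a <= k ^ 2 * (X - Y) -> Y <= 1 / (2 * sqrt b) * k / sqrt a * X.
Proof.
  intros Hb Hk Ha HY H.
  pose proof (sqrt_lt_R0 b Hb). pose proof (sqrt_lt_R0 a Ha).
  pose proof (sqrt_sqrt b ltac:(lra)). pose proof (sqrt_sqrt a ltac:(lra)).
  set (s := sqrt b * sqrt a) in *.
  assert (Hs : s * s = b * a) by (unfold s; nra).
  assert (Hspos : 0 < s) by (unfold s; nra).
  replace (1 / (2 * sqrt b) * k / sqrt a * X) with (k * X / (2 * s))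
    by (unfold s; field; lra).
  apply Rmult_le_reg_r with (2 * s * k); [nra|].
  replace (k * X / (2 * s) * (2 * s * k)) with (k ^ 2 * X) by (field; lra).
  pose proof (pow2_ge_0 (s - k)). nra.
Qed.

Theorem lemma4p5 (phi : filter_family) (atilde b c : R) :
  is_regularizing_filter phi ->
  assumption_A1 phi ->
  0 < atilde -> 0 < b -> 0 < c ->
  assumption_A2 phi atilde b c ->
  assumption_B1 phi /\ assumption_B2 phi (b * c) (1 / (2 * sqrt b)).
Proof.
  intros Hphi HA1 Hatilde Hb Hc HA2. split.
  - exact (phi_B1 phi Hphi HA1).
  - intros k a x Hk Ha Hx.
    destruct (phi_filter phi Hphi atilde k Hatilde Hk) as [Hmono [Hlip H0]].
    destruct (min_preimage_exists (phi atilde k) Hmono Hlip H0 (c * k)) as [m Hm];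
      [nra | apply (phi_attains phi Hphi HA1); nra |].
    apply amgm_bound; try assumption; [apply Rabs_pos|].
    exact (B2_core phi Hphi HA1 atilde b c k m Hatilde Hb Hc Hk HA2 Hm a x Ha Hx).
Qed.
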